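(* Let $K$ be a spherically complete non-Archimedean field with value group $|K^\times|=\mathbb{R}_{>0}$. Then every almost finite free $K^{\circ,a}$-module is isomorphic, in the category of almost $K^{\circ}$-modules, to a finite direct sum of copies of $K^{\circ,a}$.
   Context: A non-Archimedean field is a field complete for a nontrivial rank-one non-Archimedean absolute value; it is spherically complete if every decreasing sequence of closed balls has nonempty intersection. $K^\circ=\{x:|x|\le1\}$ and $K^{\circ\circ}=\{x:|x|<1\}$. Almost mathematics is relative to $(K^\circ,K^{\circ\circ})$: the category of almost $K^\circ$-modules is the Serre quotient of $K^\circ$-modules by the modules annihilated by $K^{\circ\circ}$, and $K^{\circ,a}$ is the image of $K^\circ$. An almost $K^{\circ,a}$-module $M$ is almost finite free of rank $r$ if for every finitely generated ideal $I_0\subseteq K^{\circ\circ}$ there is a morphism $(K^{\circ,a})^r\to M$ whose kernel and cokernel are annihilated by $I_0$. *)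

From HB Require Import structures.
From mathcomp Require Import all_boot all_order all_algebra.
From mathcomp Require Import reals.
Set Implicit Arguments. Unset Strict Implicit. Unset Printing Implicit Defensive.
Import Order.TTheory GRing.Theory Num.Theory.
Local Open Scope ring_scope.

Section NonArch.
Variables (R : realType) (K : fieldType) (abs : K -> R).

Definition nonarch_field : Prop :=
  (forall x, 0 <= abs x) /\
  (forall x, abs x = 0 <-> x = 0) /\
  (forall x y, abs (x * y) = abs x * abs y) /\
  (forall x y, abs (x + y) <= Num.max (abs x) (abs y)) /\
  (exists x, abs x != 0 /\ abs x != 1) /\
      (forall u : nat -> K,
         (forall e, 0 < e -> exists N, forall m n, (N <= m)%N -> (N <= n)%N ->
              abs (u m - u n) < e) ->
         exists l, forall e, 0 < e -> exists N, forall n, (N <= n)%N ->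
              abs (u n - l) < e).

Definition cball (c : K) (r : R) (x : K) : Prop := abs (x - c) <= r.

Definition spherically_complete : Prop :=
  forall (c : nat -> K) (r : nat -> R),
    (forall n, 0 < r n) ->
    (forall n x, cball (c n.+1) (r n.+1) x -> cball (c n) (r n) x) ->
    exists x, forall n, cball (c n) (r n) x.

Definition value_group_full : Prop :=
  forall t : R, (exists x, x != 0 /\ abs x = t) <-> 0 < t.

Definition intring := {x : K | abs x <= 1}.

Definition in_mideal (a : intring) : Prop := abs (val a) < 1.

Record omod := OMod {
  mty :> zmodType;
  mact : intring -> mty -> mty;
  mactDr : forall a (x y : mty), mact a (x + y) = mact a x + mact a y;
  mactDl : forall a b c (x : mty), val c = val a + val b ->
             mact c x = mact a x + mact b x;
  mactA : forall a b c (x : mty), val c = val a * val b ->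
             mact c x = mact a (mact b x);
  mact1 : forall a (x : mty), val a = 1 -> mact a x = x
}.

Definition olinear (X M : omod) (f : X -> M) : Prop :=
  (forall x y, f (x + y) = f x + f y) /\
  (forall a x, f (mact a x) = mact a (f x)).

(* K°-linear maps X -> (K°)^r, given by their r coordinates *)
Definition olinear_free (X : omod) (r : nat) (s : 'I_r -> X -> intring) : Prop :=
  forall i, (forall x y, val (s i (x + y)) = val (s i x) + val (s i y)) /\
            (forall a x, val (s i (mact a x)) = val a * val (s i x)).

(* kernel and cokernel almost zero (killed by K°°): an almost isomorphism *)
Definition almost_iso (X M : omod) (f : X -> M) : Prop :=
  [/\ olinear f,
      (forall e x, in_mideal e -> f x = 0 -> mact e x = 0) &
      (forall e y, in_mideal e -> exists x, f x = mact e y)].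

Definition almost_iso_free (X : omod) (r : nat) (s : 'I_r -> X -> intring) : Prop :=
  [/\ olinear_free s,
      (forall e x, in_mideal e -> (forall i, val (s i x) = 0) -> mact e x = 0) &
      (forall e (v : 'I_r -> intring), in_mideal e ->
          exists x, forall i, val (s i x) = val e * val (v i))].

(* A morphism (K°^a)^r -> M^a in the category of almost modules is a roof
   (K°)^r <-s- X -f-> M with s an almost isomorphism.  Its kernel and cokernel
   are (ker f)^a and (coker f)^a.  "Annihilated by I0 = (g_1,...,g_k)" in the
   almost category means that e * g_j kills the module for all e in K°°. *)
Definition almost_finite_free (M : omod) (r : nat) : Prop :=
  forall gs : seq intring, (forall g, g \in gs -> in_mideal g) ->
  exists (X : omod) (s : 'I_r -> X -> intring) (f : X -> M),
    [/\ almost_iso_free s, olinear f,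
        (forall g e x, g \in gs -> in_mideal e -> f x = 0 ->
            mact e (mact g x) = 0) &
        (forall g e y, g \in gs -> in_mideal e ->
            exists x, f x = mact e (mact g y))].

Definition almost_iso_to_free (M : omod) (n : nat) : Prop :=
  exists (X : omod) (s : 'I_n -> X -> intring) (f : X -> M),
    almost_iso_free s /\ almost_iso f.

End NonArch.

(* Fix g in K°° \ 0 and a roof (K°)^r <-s- X -f-> M whose kernel and cokernel
   are killed by K°° g.  Say that u in K^r corresponds to y in M when, for some
   c <> 0, every K°° c (u, y) is (s, f) of an element of X.  The u for which every
   K°° u corresponds to something form a K°-lattice L with
   (K°)^r <= L <= g^-1 (K°)^r.  Its gauge is a non-Archimedean norm on K^r;
   since K is spherically complete, best approximations from subspaces exist,
   and as |K^x| = R>0 Gram-Schmidt yields an orthonormal basis B, whence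
   K°° (K°)^r B <= L <= (K°)^r B.  The graph {(v, y) | v in (K°)^r, v B
   corresponds to y} then maps almost isomorphically onto both (K°)^r and M;
   on the M side this uses that an almost finite free module has almost no
   torsion. *)

From HB Require Import structures.
From mathcomp Require Import all_boot all_order all_algebra.
From mathcomp Require Import reals classical_sets boolp.
From mathcomp Require Import ring lra.
Set Implicit Arguments. Unset Strict Implicit. Unset Printing Implicit Defensive.
Import Order.TTheory GRing.Theory Num.Theory.
Local Open Scope ring_scope.

Section AbsoluteValue.
Variables (R : realType) (K : fieldType) (abs : K -> R).
Hypothesis hK : nonarch_field abs.

Lemma abs_ge0 x : 0 <= abs x. Proof. by case: hK. Qed.

Lemma abs_eq0 x : abs x = 0 <-> x = 0. Proof. by case: hK => _ []. Qed.

Lemma absM x y : abs (x * y) = abs x * abs y. Proof. by case: hK => _ [] _ []. Qed.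

Lemma absD_le_max x y : abs (x + y) <= Num.max (abs x) (abs y).
Proof. by case: hK => _ [] _ [] _ []. Qed.

Lemma abs0 : abs 0 = 0. Proof. exact/abs_eq0. Qed.

Lemma abs_gt0 x : x != 0 -> 0 < abs x.
Proof. by move=> /eqP x0; rewrite lt_def abs_ge0 andbT; apply/eqP => /abs_eq0. Qed.

Lemma abs1 : abs 1 = 1.
Proof.
have a1_gt0 : 0 < abs 1 := abs_gt0 (oner_neq0 K).
by apply: (mulfI (lt0r_neq0 a1_gt0)); rewrite -absM !mulr1.
Qed.

Lemma absN x : abs (- x) = abs x.
Proof.
have aN1 : abs (-1) * abs (-1) = 1 by rewrite -absM mulrNN mulr1 abs1.
have aN1_eq1 : abs (-1) = 1 by have := abs_ge0 (-1); nra.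
by rewrite -mulN1r absM aN1_eq1 mul1r.
Qed.

Lemma abs_distC x y : abs (x - y) = abs (y - x).
Proof. by rewrite -absN opprB. Qed.

Lemma absV x : abs x^-1 = (abs x)^-1.
Proof.
have [->|x0] := eqVneq x 0; first by rewrite invr0 abs0 invr0.
by rewrite -[LHS]mul1r -(mulVf (lt0r_neq0 (abs_gt0 x0))) -mulrA -absM mulfV // abs1 mulr1.
Qed.

Lemma absD_le x y t : abs x <= t -> abs y <= t -> abs (x + y) <= t.
Proof. by move=> xt yt; apply: le_trans (absD_le_max x y) _; rewrite ge_max xt yt. Qed.

Hypothesis hval : value_group_full abs.

Lemma exists_abs t : 0 < t -> exists2 x, x != 0 & abs x = t.
Proof. by move=> /(proj2 (hval t)) [x [x0 xt]]; exists x. Qed.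

Lemma exists_abs_between a b : 0 <= a -> a < b -> exists2 x, x != 0 & a < abs x < b.
Proof.
move=> a_ge0 ab; have [|x x0 xt] := exists_abs (t := (a + b) / 2); first lra.
by exists x => //; rewrite xt; apply/andP; split; lra.
Qed.

End AbsoluteValue.

Section AdditiveMorphism.
Variables (U V : zmodType) (g : U -> V).
Hypothesis gD : {morph g : x y / x + y}.

Lemma addmorph0 : g 0 = 0.
Proof. by apply: (addrI (g 0)); rewrite -gD !addr0. Qed.

Lemma addmorphN : {morph g : x / - x}.
Proof. by move=> x; apply: (addrI (g x)); rewrite -gD !subrr addmorph0. Qed.

Lemma addmorphB : {morph g : x y / x - y}.
Proof. by move=> x y; rewrite gD addmorphN. Qed.

End AdditiveMorphism.

Section IntegerRing.
Variables (R : realType) (K : fieldType) (abs : K -> R).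
Hypothesis hK : nonarch_field abs.
Implicit Types (e g a b : intring abs).

Definition intring_of (x : K) (hx : abs x <= 1) : intring abs := exist _ x hx.

Fact intring_mul_subproof (a b : intring abs) : abs (val a * val b) <= 1.
Proof. by rewrite absM //; apply: mulr_ile1; rewrite ?abs_ge0 ?(valP a) ?(valP b). Qed.

Definition intring_mul (a b : intring abs) : intring abs :=
  intring_of (intring_mul_subproof a b).

Fact intring1_subproof : abs 1 <= 1. Proof. by rewrite abs1. Qed.

Definition intring1 : intring abs := intring_of intring1_subproof.

Lemma mideal_mulr e a : in_mideal e -> in_mideal (intring_mul e a).
Proof.
rewrite /in_mideal /= absM // => e_lt1.
by have := valP a; have := abs_ge0 hK (val a); have := abs_ge0 hK (val e); nra.
Qed.

Hypothesis hval : value_group_full abs.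

Lemma exists_mideal_neq0 : exists2 e : intring abs, in_mideal e & val e != 0.
Proof.
have [x x0 /andP[_ x_lt1]] := exists_abs_between hval (lexx (0 : R)) ltr01.
by exists (intring_of (ltW x_lt1)).
Qed.

Lemma mideal_factor e : in_mideal e -> exists g e' : intring abs,
  [/\ in_mideal g, in_mideal e', val g != 0 & val e = val e' * val g].
Proof.
move=> e_lt1; have [x x0 /andP[ex x_lt1]] := exists_abs_between hval (abs_ge0 hK _) e_lt1.
have ax_gt0 := abs_gt0 hK x0.
have e'_lt1 : abs (val e / x) < 1 by rewrite absM // absV // ltr_pdivrMr // mul1r.
exists (intring_of (ltW x_lt1)), (intring_of (ltW e'_lt1)).
by split => //=; rewrite mulfVK.
Qed.

Lemma mideal_le1 (t : R) : (forall e, in_mideal e -> abs (val e) * t <= 1) -> t <= 1.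
Proof.
move=> mt_le1; rewrite leNgt; apply/negP => t_gt1.
have [||x _ /andP[tVx x_lt1]] := exists_abs_between hval (_ : 0 <= t^-1) (_ : t^-1 < 1).
- by rewrite invr_ge0; lra.
- by rewrite invf_lt1 //; lra.
have := mt_le1 (intring_of (ltW x_lt1)) x_lt1 => /=.
have : t^-1 * t = 1 by rewrite mulVf //; lra.
nra.
Qed.

Section ModuleAction.
Variable X : omod abs.
Implicit Types (x y : X).

Lemma mactr0 a : mact a (0 : X) = 0.
Proof. by apply: (addrI (mact a 0)); rewrite -mactDr !addr0. Qed.

Lemma mactN a : {morph mact a : x / - x >-> - x :> X}.
Proof. exact: addmorphN (mactDr a). Qed.

Lemma eq_mact a b x : val a = val b -> mact a x = mact b x.
Proof. by move=> /val_inj ->. Qed.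

Lemma mactM a b x : mact a (mact b x) = mact (intring_mul a b) x.
Proof. by rewrite -(mactA (c := intring_mul a b)). Qed.

Lemma mactC a b x : mact a (mact b x) = mact b (mact a x).
Proof. by rewrite !mactM; apply: eq_mact; rewrite /= mulrC. Qed.

End ModuleAction.

End IntegerRing.

Section OrthonormalBasis.
Local Open Scope classical_set_scope.
Local Open Scope ring_scope.
Variables (R : realType) (K : fieldType) (abs : K -> R).
Hypotheses (hK : nonarch_field abs) (hsph : spherically_complete abs).

Lemma row_spherically_complete n (c : nat -> 'rV[K]_n) (rho : nat -> R) :
  (forall k, 0 < rho k) -> (forall k, rho k.+1 <= rho k) ->
  (forall k i, abs (c k.+1 0 i - c k 0 i) <= rho k) ->
  exists x : 'rV[K]_n, forall k i, abs (x 0 i - c k 0 i) <= rho k.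
Proof.
move=> rho_gt0 rho_dec c_near.
have /fin_all_exists [x xP] i : exists y, forall k, cball abs (c k 0 i) (rho k) y.
  apply: hsph => // k y; rewrite /cball => y_near.
  rewrite -(subrKA (c k.+1 0 i)); apply: absD_le => //.
  exact: le_trans y_near (rho_dec k).
by exists (\row_i x i) => k i; rewrite mxE; apply: xP.
Qed.

Hypothesis hval : value_group_full abs.
Variables (r : nat) (N : 'rV[K]_r -> R).
Hypotheses (N_ge0 : forall u, 0 <= N u) (N_gt0 : forall u, u != 0 -> 0 < N u).
Hypotheses (NZ : forall c u, N (c *: u) = abs c * N u)
           (ND : forall u v, N (u + v) <= Num.max (N u) (N v)).

Lemma N0 : N 0 = 0.
Proof. by rewrite -(scale0r (0 : 'rV[K]_r)) NZ abs0 // mul0r. Qed.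

Lemma NN u : N (- u) = N u.
Proof. by rewrite -scaleN1r NZ absN // abs1 // mul1r. Qed.

Lemma NB u v : N (u - v) <= Num.max (N u) (N v).
Proof. by rewrite -(NN v); apply: ND. Qed.

Definition supported j (l : 'rV[K]_r) := forall i : 'I_r, (j <= i)%N -> l 0 i = 0.

Lemma supportedD j l l' : supported j l -> supported j l' -> supported j (l + l').
Proof. by move=> hl hl' i ji; rewrite !mxE hl // hl' // addr0. Qed.

Lemma supportedB j l l' : supported j l -> supported j l' -> supported j (l - l').
Proof. by move=> hl hl' i ji; rewrite !mxE hl // hl' // subr0. Qed.

Lemma supportedZ j c l : supported j l -> supported j (c *: l).
Proof. by move=> hl i ji; rewrite mxE hl // mulr0. Qed.

(* Encodes [N (l *m B) = max_i |l_i|] for [l] supported below [j]. *)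
Definition orthonormal_on j (B : 'M[K]_r) := forall l, supported j l ->
  forall t, 0 <= t -> N (l *m B) <= t <-> forall i, abs (l 0 i) <= t.

Lemma orthonormal_coord j B l : orthonormal_on j B -> supported j l ->
  forall i, abs (l 0 i) <= N (l *m B).
Proof. by move=> hB hl; apply/(hB l hl). Qed.

Definition lower_triangular_on j (B : 'M[K]_r) :=
  forall i k : 'I_r, (i < j)%N -> (i < k)%N -> B i k = 0.

(* Minimising sequences converge coordinatewise by spherical completeness,
   the coordinates being controlled by the orthonormality of [B]. *)
Lemma best_approximation j B e : orthonormal_on j B ->
  exists2 ls, supported j ls &
    forall l, supported j l -> N (e - ls *m B) <= N (e - l *m B).
Proof.
move=> hB.
pose S : set R := (fun l => N (e - l *m B)) @` supported j.
have S_neq0 : S !=set0.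
  by exists (N (e - 0 *m B)), 0 => // i _; rewrite mxE.
have S_lb : has_lbound S by exists 0 => _ [l _ <-].
pose d := inf S; pose rho n : R := d + n.+1%:R^-1.
have d_ge0 : 0 <= d by apply: lb_le_inf => // _ [l _ <-].
have rho_gt0 n : 0 < rho n by rewrite ltr_wpDl // invr_gt0.
have rho_dec n : rho n.+1 <= rho n by rewrite lerD2l lef_pV2 ?posrE // ler_nat.
have /choice [lam lamP] n : exists l, supported j l /\ N (e - l *m B) < rho n.
  have /(inf_lt S_neq0) [_ [l hl <-] lt_rho] : inf S < rho n by rewrite ltrDl invr_gt0.
  by exists l.
have lam_near n i : abs (lam n.+1 0 i - lam n 0 i) <= rho n.
  have hs : supported j (lam n.+1 - lam n) by apply: supportedB; apply: (lamP _).1.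
  apply: le_trans (_ : N ((lam n.+1 - lam n) *m B) <= _).
    by have := orthonormal_coord hB hs i; rewrite !mxE.
  have -> : (lam n.+1 - lam n) *m B = (e - lam n *m B) - (e - lam n.+1 *m B).
    by rewrite mulmxBl opprB [RHS]addrC addrA subrK.
  apply: le_trans (NB _ _) _; rewrite ge_max (ltW (lamP n).2) /=.
  exact: ltW (lt_le_trans (lamP n.+1).2 (rho_dec n)).
have [x x_near] := row_spherically_complete rho_gt0 rho_dec lam_near.
pose ls := \row_i (if (i < j)%N then x 0 i else 0).
have hls : supported j ls by move=> i ji; rewrite mxE ltnNge ji.
exists ls => // l hl.
have ls_rho n : N (e - ls *m B) <= rho n.
  rewrite -(subrK (lam n *m B) e) -addrA -mulmxBl.
  apply: le_trans (ND _ _) _; rewrite ge_max (ltW (lamP n).2) /=.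
  apply/(hB _ (supportedB (lamP n).1 hls)); first exact: ltW.
  move=> i; rewrite !mxE; case: ifP => [_|/negbT]; first by rewrite abs_distC.
  by rewrite -leqNgt => /(lamP n).1 ->; rewrite subr0 abs0 // ltW.
apply: le_trans (_ : d <= _); last by apply: ge_inf => //; exists l.
rewrite leNgt; apply/negP => /ltr_add_invr [k]; rewrite ltNge.
by rewrite ls_rho.
Qed.

Lemma best_approximation_orthogonal j B w :
  (forall l, supported j l -> N w <= N (w - l *m B)) ->
  forall a l, supported j l -> N (a *: w + l *m B) = Num.max (abs a * N w) (N (l *m B)).
Proof.
move=> w_best a l hl; apply/le_anti; rewrite -NZ ND /= ge_max.
have aw_le : N (a *: w) <= N (a *: w + l *m B).
  have [->|a0] := eqVneq a 0; first by rewrite scale0r N0.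
  have -> : a *: w + l *m B = a *: (w - (- a^-1 *: l) *m B).
    by rewrite -scalemxAl scaleNr opprK scalerDr scalerA mulfV // scale1r.
  by rewrite !NZ ler_wpM2l ?abs_ge0 //; exact/w_best/supportedZ.
rewrite aw_le /=; have := NB (a *: w + l *m B) (a *: w).
by rewrite addrC addKr => /le_trans; apply; rewrite ge_max lexx.
Qed.

Definition set_row (B : 'M[K]_r) (i0 : 'I_r) (b : 'rV[K]_r) : 'M[K]_r :=
  \matrix_(i, k) if i == i0 then b 0 k else B i k.

Lemma mul_set_row (B : 'M[K]_r) i0 b l :
  l *m set_row B i0 b = l 0 i0 *: b + (\row_i (if i == i0 then 0 else l 0 i)) *m B.
Proof.
apply/rowP => k; rewrite !mxE (bigD1 i0) //= [X in _ = _ + X](bigD1 i0) //=.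
rewrite !mxE !eqxx mul0r add0r; congr (_ + _).
by apply: eq_bigr => i /negPf i_neq; rewrite !mxE i_neq.
Qed.

(* Gram-Schmidt step: the normalised distance from [e_j] to the span of the
   first [j] rows is orthogonal to that span, and triangularity keeps it
   nonzero. *)
Lemma exists_orthogonal_row j B (jo : 'I_r) : val jo = j ->
  orthonormal_on j B -> lower_triangular_on j B ->
  exists2 b : 'rV[K]_r, (forall k : 'I_r, (j < k)%N -> b 0 k = 0) &
    forall a l, supported j l -> N (a *: b + l *m B) = Num.max (abs a) (N (l *m B)).
Proof.
move=> jo_j hB B_tri; pose e : 'rV[K]_r := delta_mx 0 jo.
have [ls hls ls_best] := best_approximation e hB.
pose w := e - ls *m B.
have lsB_coord (k : 'I_r) : (j <= k)%N -> (ls *m B) 0 k = 0.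
  move=> jk; rewrite mxE big1 // => i _.
  case: (ltnP i j) => ij; last by rewrite hls ?mul0r.
  by rewrite B_tri ?mulr0 //; exact: leq_trans ij jk.
have w_coord (k : 'I_r) : (j <= k)%N -> w 0 k = (k == jo)%:R.
  by move=> jk; rewrite 2!mxE [X in _ + X]mxE lsB_coord // oppr0 addr0.
have w_neq0 : w != 0.
  have w_jo : w 0 jo = 1 by rewrite w_coord ?eqxx ?jo_j.
  by apply/eqP => w0; move: w_jo; rewrite w0 mxE => /eqP; rewrite eq_sym oner_eq0.
have [|c c0 c_abs] := exists_abs hval (t := (N w)^-1); first by rewrite invr_gt0 N_gt0.
exists (c *: w) => [k jk|a l hl].
  by rewrite mxE w_coord ?(ltnW jk) // -val_eqE jo_j gtn_eqF // mulr0.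
rewrite scalerA (best_approximation_orthogonal (j := j)) // => [|l' hl'].
  by rewrite absM // c_abs mulfVK // lt0r_neq0 // N_gt0.
by rewrite /w -addrA -opprD -mulmxDl ls_best //; apply: supportedD.
Qed.

Lemma orthonormal_set_row j B (jo : 'I_r) (b : 'rV[K]_r) :
  val jo = j -> orthonormal_on j B ->
  (forall a l, supported j l -> N (a *: b + l *m B) = Num.max (abs a) (N (l *m B))) ->
  orthonormal_on j.+1 (set_row B jo b).
Proof.
move=> jo_j hB b_orth l hl t t_ge0; pose l0 := \row_i (if i == jo then 0 else l 0 i).
have hl0 : supported j l0.
  move=> i ji; rewrite mxE; case: eqVneq => // i_jo; apply: hl.
  by rewrite ltn_neqAle ji andbT -jo_j; apply: contra_neq i_jo => /val_inj ->.
have l0_le := hB _ hl0 t t_ge0.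
rewrite mul_set_row b_orth // ge_max; split => [/andP[lj_le /l0_le l0_le'] i|l_le].
  by have := l0_le' i; rewrite mxE; case: eqVneq => [->|].
by rewrite l_le; apply/l0_le => i; rewrite mxE; case: ifP; rewrite ?abs0.
Qed.

Lemma lower_triangular_set_row j B (jo : 'I_r) (b : 'rV[K]_r) : val jo = j ->
  lower_triangular_on j B -> (forall k : 'I_r, (j < k)%N -> b 0 k = 0) ->
  lower_triangular_on j.+1 (set_row B jo b).
Proof.
move=> jo_j B_tri b_tri i k ij ik; rewrite mxE; case: eqVneq => [i_jo|i_jo].
  by apply: b_tri; rewrite -jo_j -i_jo.
apply: B_tri ik; rewrite ltn_neqAle -ltnS ij andbT -jo_j.
by apply: contra_neq i_jo => /val_inj ->.
Qed.

Lemma exists_orthonormal_triangular j : (j <= r)%N ->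
  exists B, orthonormal_on j B /\ lower_triangular_on j B.
Proof.
elim: j => [_|j IHj jr].
  exists 0; split=> // l hl t t_ge0; rewrite mulmx0 N0 t_ge0; split=> // _ i.
  by rewrite hl // abs0.
have [B [hB B_tri]] := IHj (ltnW jr).
have [b b_tri b_orth] := exists_orthogonal_row (jo := Ordinal jr) erefl hB B_tri.
exists (set_row B (Ordinal jr) b).
by split; [apply: orthonormal_set_row | apply: lower_triangular_set_row].
Qed.

Lemma exists_orthonormal_basis : exists2 B : 'M[K]_r, B \in unitmx &
  forall v t, 0 <= t -> N (v *m B) <= t <-> forall i, abs (v 0 i) <= t.
Proof.
have [B [hB _]] := exists_orthonormal_triangular (leqnn r).
have hr l : supported r l by move=> i; rewrite leqNgt ltn_ord.
exists B => [|v]; last exact: hB.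
have B_inj (v : 'rV[K]_r) : v *m B = 0 -> v = 0.
  move=> vB0; apply/rowP => k; rewrite mxE; apply/(abs_eq0 hK); apply/eqP.
  rewrite eq_le (abs_ge0 hK) andbT; move: k; apply/(hB _ (hr _) 0 (lexx 0)).
  by rewrite vB0 N0.
rewrite -row_free_unit -kermx_eq0; apply/eqP/row_matrixP => i.
by rewrite row0; apply: B_inj; rewrite -row_mul mulmx_ker row0.
Qed.

End OrthonormalBasis.

Section Gauge.
Local Open Scope classical_set_scope.
Local Open Scope ring_scope.
Variables (R : realType) (K : fieldType) (abs : K -> R).
Hypotheses (hK : nonarch_field abs) (hsph : spherically_complete abs).
Hypothesis hval : value_group_full abs.
Variables (r : nat) (L : 'rV[K]_r -> Prop) (a : K).
Hypothesis a_neq0 : a != 0.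
Implicit Types (u v : 'rV[K]_r) (c d : K).
Hypotheses (LD : forall u v, L u -> L v -> L (u + v))
           (LZ : forall c u, abs c <= 1 -> L u -> L (c *: u))
           (L_unit : forall u, (forall i, abs (u 0 i) <= 1) -> L u)
           (L_bounded : forall u, L u -> forall i, abs (a * u 0 i) <= 1).

Let scales u : set R := [set x | exists2 c, c != 0 /\ L (c^-1 *: u) & x = abs c].

Definition gauge u := inf (scales u).

Let scales_neq0 u : scales u !=set0.
Proof.
have s_ge0 : 0 <= \sum_i abs (u 0 i) by apply: sumr_ge0 => i _; apply: abs_ge0.
have [|c c0 c_abs] := exists_abs hval (t := 1 + \sum_i abs (u 0 i)); first lra.
exists (abs c), c => //; split => //; apply: L_unit => i.
rewrite mxE absM // absV // c_abs ler_pdivrMl; last lra.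
rewrite mulr1 (bigD1 i) //=.
have : 0 <= \sum_(k | k != i) abs (u 0 k) by apply: sumr_ge0 => k _; apply: abs_ge0.
lra.
Qed.

Let scales_lb u : has_lbound (scales u).
Proof. by exists 0 => _ [c _ ->]; apply: abs_ge0. Qed.

Lemma gauge_le u c : c != 0 -> L (c^-1 *: u) -> gauge u <= abs c.
Proof. by move=> c0 hc; apply: ge_inf => //; exists c. Qed.

Lemma gauge_lt u t : gauge u < t -> exists2 c, c != 0 /\ L (c^-1 *: u) & abs c < t.
Proof. by move=> /(inf_lt (scales_neq0 u)) [_ [c hc ->] ct]; exists c. Qed.

Lemma gauge_ge0 u : 0 <= gauge u.
Proof. by apply: lb_le_inf => // _ [c _ ->]; apply: abs_ge0. Qed.

Lemma gauge0 : gauge 0 = 0.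
Proof.
apply/le_anti; rewrite gauge_ge0 andbT leNgt; apply/negP => g0_gt0.
have [|c c0 c_abs] := exists_abs hval (t := gauge 0 / 2); first lra.
have L0 : L (c^-1 *: 0) by rewrite scaler0; apply: L_unit => i; rewrite mxE abs0 // ler01.
by have := gauge_le c0 L0; rewrite c_abs; lra.
Qed.

Lemma gaugeZ c u : gauge (c *: u) = abs c * gauge u.
Proof.
have [->|c0] := eqVneq c 0; first by rewrite scale0r gauge0 abs0 // mul0r.
have Z_le d v : d != 0 -> gauge (d *: v) <= abs d * gauge v.
  move=> d0; rewrite leNgt; apply/negP => lt_gauge; have ad_gt0 := abs_gt0 hK d0.
  have /gauge_lt [b [b0 hb] b_lt] : gauge v < gauge (d *: v) / abs d.
    by rewrite ltr_pdivlMr // mulrC.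
  have := @gauge_le (d *: v) (d * b) (mulf_neq0 d0 b0).
  rewrite scalerA invfM mulrAC mulVf // mul1r => /(_ hb).
  by rewrite absM //; move: b_lt; rewrite ltr_pdivlMr //; nra.
have := Z_le c^-1 (c *: u) (invr_neq0 c0).
rewrite scalerA mulVf // scale1r absV // => Vc_le.
apply/le_anti; rewrite Z_le //= -(mulVKf (lt0r_neq0 (abs_gt0 hK c0)) (gauge (c *: u))).
by rewrite ler_wpM2l ?abs_ge0.
Qed.

Lemma L_invscale_le c d u : c != 0 -> d != 0 -> abs d <= abs c ->
  L (d^-1 *: u) -> L (c^-1 *: u).
Proof.
move=> c0 d0 dc hd; rewrite -[u](scalerKV d0) scalerA mulrC; apply: LZ => //.
by rewrite absM // absV // ler_pdivrMr ?mul1r // abs_gt0.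
Qed.

Lemma gaugeD u v : gauge (u + v) <= Num.max (gauge u) (gauge v).
Proof.
rewrite leNgt gt_max; apply/negP.
move=> /andP[/gauge_lt[c [c0 hc] c_lt] /gauge_lt[d [d0 hd] d_lt]].
have [dc|cd] := leP (abs d) (abs c).
  have huv : L (c^-1 *: (u + v)).
    by rewrite scalerDr; apply: LD => //; apply: L_invscale_le hd.
  by have := gauge_le c0 huv; rewrite leNgt c_lt.
have huv : L (d^-1 *: (u + v)).
  by rewrite scalerDr; apply: LD => //; apply: L_invscale_le (ltW cd) hc.
by have := gauge_le d0 huv; rewrite leNgt d_lt.
Qed.

Lemma gauge_gt0 u : u != 0 -> 0 < gauge u.
Proof.
move=> u0; have [i ui0] : exists i, u 0 i != 0.
  apply/existsP; apply: contraNT u0 => /existsPn ui0.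
  by apply/eqP/rowP => i; rewrite mxE; apply/eqP/negPn.
have au_gt0 : 0 < abs a * abs (u 0 i) by rewrite mulr_gt0 // abs_gt0.
apply: lt_le_trans au_gt0 _; apply: lb_le_inf => // _ [c [c0 hc] ->].
have c_gt0 := abs_gt0 hK c0.
have := L_bounded hc i; rewrite mxE mulrCA absM // absM // absV // => hcu.
rewrite -(mulVKf (lt0r_neq0 c_gt0) (abs a * _)) -[X in _ <= X]mulr1.
by rewrite ler_wpM2l // ltW.
Qed.

Lemma gauge_le1 u : L u -> gauge u <= 1.
Proof.
move=> hu; have hu1 : L (1^-1 *: u) by rewrite invr1 scale1r.
by have := gauge_le (oner_neq0 K) hu1; rewrite abs1.
Qed.

Lemma lt1_gauge u : gauge u < 1 -> L u.
Proof.
by move=> /gauge_lt [c [c0 hc] c_lt1]; rewrite -[u](scalerKV c0); apply: LZ hc; apply: ltW.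
Qed.

Lemma almost_lattice_basis : exists2 B : 'M[K]_r, B \in unitmx &
  (forall v e, (forall i, abs (v 0 i) <= 1) -> abs e < 1 -> L (e *: (v *m B))) /\
  (forall u, L u -> exists2 v : 'rV[K]_r, (forall i, abs (v 0 i) <= 1) & u = v *m B).
Proof.
have [B B_unit B_orth] :=
  exists_orthonormal_basis hK hsph hval gauge_ge0 gauge_gt0 gaugeZ gaugeD.
exists B => //; split => [v e v_le1 e_lt1 | u hu].
  apply: lt1_gauge; rewrite gaugeZ; have := abs_ge0 hK e.
  have := (B_orth v 1 ler01).2 v_le1; have := gauge_ge0 (v *m B).
  nra.
exists (u *m invmx B); last by rewrite mulmxKV.
by apply/(B_orth _ 1 ler01); rewrite mulmxKV // gauge_le1.
Qed.

End Gauge.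

Section AlmostFiniteFree.
Variables (R : realType) (K : fieldType) (abs : K -> R).
Hypotheses (hK : nonarch_field abs) (hval : value_group_full abs).
Implicit Types (e a c : intring abs).

(* A roof [(K°)^r <-s- X -f-> M], [s] an almost isomorphism, represents a
   morphism of almost modules; here its kernel and cokernel are killed by
   [K°° g]. *)
Definition roof (M : omod abs) (r : nat) g (X : omod abs)
    (s : 'I_r -> X -> intring abs) (f : X -> M) :=
  [/\ almost_iso_free s, olinear f,
      (forall e x, in_mideal e -> f x = 0 -> mact e (mact g x) = 0) &
      (forall e y, in_mideal e -> exists x, f x = mact e (mact g y))].

Lemma almost_finite_free_roof M r g : almost_finite_free M r -> in_mideal g ->
  exists X s f, @roof M r g X s f.
Proof.
move=> hM g_lt1.
have gs_m g' : g' \in [:: g] -> in_mideal g' by rewrite inE => /eqP ->.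
have [X [s [f [hs hf f_ker f_coker]]]] := hM _ gs_m.
by exists X, s, f; split=> // [e x|e y]; [apply: f_ker | apply: f_coker]; rewrite mem_head.
Qed.

Definition almost_torsion_free (M : omod abs) :=
  forall (y : M) c, val c != 0 -> mact c y = 0 -> forall e, in_mideal e -> mact e y = 0.

Section Roof.
Variables (M : omod abs) (r : nat) (g : intring abs) (X : omod abs).
Variables (s : 'I_r -> X -> intring abs) (f : X -> M).
Hypotheses (hroof : roof g s f) (g_neq0 : val g != 0).
Implicit Types (x : X) (y : M) (u : 'rV[K]_r).

Let s_iso : almost_iso_free s. Proof. by case: hroof. Qed.
Let sD i : {morph (fun x => val (s i x)) : x y / x + y}.
Proof. by case: s_iso => /(_ i) []. Qed.
Let sZ i a x : val (s i (mact a x)) = val a * val (s i x).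
Proof. by case: s_iso => /(_ i) []. Qed.
Let s_ker e x : in_mideal e -> (forall i, val (s i x) = 0) -> mact e x = 0.
Proof. by case: s_iso => _ ker _; apply: ker. Qed.
Let s_coker e (v : 'I_r -> intring abs) : in_mideal e ->
  exists x, forall i, val (s i x) = val e * val (v i).
Proof. by case: s_iso => _ _ coker; apply: coker. Qed.
Let fD : {morph f : x y / x + y}. Proof. by case: hroof => _ []. Qed.
Let fZ a x : f (mact a x) = mact a (f x). Proof. by case: hroof => _ []. Qed.
Let f_ker e x : in_mideal e -> f x = 0 -> mact e (mact g x) = 0.
Proof. by case: hroof => _ _ ker _; apply: ker. Qed.
Let f_coker e y : in_mideal e -> exists x, f x = mact e (mact g y).
Proof. by case: hroof => _ _ _ coker; apply: coker. Qed.

Definition roof_pair u y := exists2 x, forall i, val (s i x) = u 0 i & f x = y.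

Definition corresponds u y := exists2 c, val c != 0 &
  forall e, in_mideal e -> roof_pair ((val e * val c) *: u) (mact e (mact c y)).

Lemma correspondsD u y u' y' : corresponds u y -> corresponds u' y' ->
  corresponds (u + u') (y + y').
Proof.
move=> [c c0 hc] [c' c'0 hc']; exists (intring_mul hK c c'); first by rewrite mulf_neq0.
move=> e e_lt1; have [x1 hs1 hf1] := hc _ (mideal_mulr hK c' e_lt1).
have [x2 hs2 hf2] := hc' _ (mideal_mulr hK c e_lt1).
exists (x1 + x2) => [i|]; first by rewrite sD hs1 hs2 !mxE /=; ring.
rewrite fD hf1 hf2 !mactDr !mactM; congr (_ + _); apply: eq_mact => /=; ring.
Qed.

Lemma correspondsZ a u y : corresponds u y -> corresponds (val a *: u) (mact a y).
Proof.
move=> [c c0 hc]; exists c => // e e_lt1; have [x hs hf] := hc e e_lt1.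
exists (mact a x) => [i|]; first by rewrite sZ hs !mxE; ring.
by rewrite fZ hf (mactC hK a) (mactC hK a c).
Qed.

Lemma correspondsN u y : corresponds u y -> corresponds (- u) (- y).
Proof.
move=> [c c0 hc]; exists c => // e e_lt1; have [x hs hf] := hc e e_lt1.
exists (- x) => [i|]; first by rewrite (addmorphN (sD i)) hs !mxE mulrN.
by rewrite (addmorphN fD) hf !mactN.
Qed.

Lemma corresponds0 : corresponds 0 0.
Proof.
exists (intring1 hK) => [|e _]; first exact: oner_neq0.
exists 0 => [i|]; first by rewrite (addmorph0 (sD i)) scaler0 mxE.
by rewrite (addmorph0 fD) !mactr0.
Qed.

Lemma corresponds_surj y : exists u, corresponds u y.
Proof.
have [e0 e0_lt1 e0_neq0] := exists_mideal_neq0 hval.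
have [x hx] := f_coker y e0_lt1; pose c := intring_mul hK e0 g.
have c_neq0 : val c != 0 by rewrite mulf_neq0.
exists ((val c)^-1 *: \row_i val (s i x)), c => // e _.
exists (mact e x) => [i|].
  by rewrite sZ !mxE mulrA -(mulrA (val e)) mulfV // mulr1.
by rewrite fZ hx !mactM; apply: eq_mact => /=; rewrite mulrA.
Qed.

(* Two elements of [X] with the same image differ by an element killed by
   [K°° g], hence have the same coordinates since [(K°)^r] is torsion free. *)
Lemma corresponds_roof u y x : corresponds u y -> f x = y ->
  forall i, val (s i x) = u 0 i.
Proof.
move=> [c c0 hc] fx i; have [e3 e3_lt1 e3_neq0] := exists_mideal_neq0 hval.
have [x' hs' hf'] := hc e3 e3_lt1.
have : f (mact e3 (mact c x) - x') = 0 by rewrite (addmorphB fD) !fZ fx hf' subrr.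
move=> /(f_ker e3_lt1) /(congr1 (fun z => val (s i z))).
rewrite /= !sZ (addmorphB (sD i)) (addmorph0 (sD i)) !sZ hs' mxE => h.
have /eqP : val e3 * val g * (val e3 * val c) * (val (s i x) - u 0 i) = 0.
  by rewrite -h; ring.
by rewrite !mulf_eq0 (negPf e3_neq0) (negPf g_neq0) (negPf c0) subr_eq0 => /eqP.
Qed.

Lemma corresponds_inj u y : corresponds u y ->
  (forall e, in_mideal e -> mact e y = 0) -> u = 0.
Proof.
move=> uy y_tors; have [e e_lt1 e_neq0] := exists_mideal_neq0 hval.
have := correspondsZ e uy; rewrite y_tors // => /corresponds_roof /(_ (addmorph0 fD)) eu0.
apply/rowP => i; have := eu0 i; rewrite (addmorph0 (sD i)) !mxE => /esym /eqP.
by rewrite mulf_eq0 (negPf e_neq0) => /eqP.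
Qed.

Lemma roof_torsion y c e : val c != 0 -> mact c y = 0 -> in_mideal e ->
  mact e (mact g y) = 0.
Proof.
move=> c0 cy0 e_lt1; have [u uy] := corresponds_surj y.
have u0 : u = 0.
  apply/rowP => i; have := correspondsZ c uy; rewrite cy0 => /corresponds_inj.
  move=> /(_ (fun e' _ => mactr0 _ e')) /rowP /(_ i) /eqP; rewrite !mxE mulf_eq0.
  by rewrite (negPf c0) => /eqP.
have [g' [e' [g'_lt1 e'_lt1 _ e_eq]]] := mideal_factor hK hval e_lt1.
have [x hx] := f_coker y g'_lt1.
have sx0 i : val (s i x) = 0.
  have /(correspondsZ g) /(correspondsZ g') : corresponds 0 y by rewrite -u0.
  by move=> /corresponds_roof /(_ hx) ->; rewrite !scaler0 mxE.
have := congr1 f (s_ker e'_lt1 sx0); rewrite fZ hx (addmorph0 fD) !mactM => <-.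
by apply: eq_mact => /=; rewrite e_eq.
Qed.

Definition roof_lattice u := forall e, in_mideal e -> exists y, corresponds (val e *: u) y.

Lemma corresponds_lattice u y : corresponds u y -> roof_lattice u.
Proof. by move=> uy e _; exists (mact e y); apply: correspondsZ. Qed.

Lemma roof_latticeD u u' : roof_lattice u -> roof_lattice u' -> roof_lattice (u + u').
Proof.
move=> hu hu' e e_lt1; have [y uy] := hu e e_lt1; have [y' uy'] := hu' e e_lt1.
by exists (y + y'); rewrite scalerDr; apply: correspondsD.
Qed.

Lemma roof_latticeZ (a : K) u : abs a <= 1 -> roof_lattice u -> roof_lattice (a *: u).
Proof.
move=> a_le1 hu e e_lt1; have [y uy] := hu e e_lt1.
exists (mact (intring_of a_le1) y); rewrite scalerA mulrC -scalerA.
exact: (correspondsZ (intring_of a_le1) uy).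
Qed.

Lemma roof_lattice_unit u : (forall i, abs (u 0 i) <= 1) -> roof_lattice u.
Proof.
move=> u_le1 e e_lt1; have [g' [e' [g'_lt1 e'_lt1 _ e_eq]]] := mideal_factor hK hval e_lt1.
have [x hx] := s_coker (fun i => intring_of (u_le1 i)) g'_lt1.
exists (mact e' (f x)), (intring1 hK) => [|ep _]; first exact: oner_neq0.
exists (mact ep (mact e' x)) => [i|]; first by rewrite !sZ hx !mxE e_eq /=; ring.
by rewrite !fZ (mact1 (a := intring1 hK)).
Qed.

Lemma roof_lattice_bounded u : roof_lattice u -> forall i, abs (val g * u 0 i) <= 1.
Proof.
move=> hu i; apply: (mideal_le1 hval) => e e_lt1; rewrite -absM //.
apply: (mideal_le1 hval) => e'' e''_lt1; rewrite -absM //.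
have [y uy] := hu e e_lt1; have [x hx] := f_coker y e''_lt1.
have /(correspondsZ g) /(correspondsZ e'') := uy.
move=> /corresponds_roof /(_ hx) /(_ i); rewrite !mxE => sx.
by have := valP (s i x); rewrite sx; congr (_ <= _); congr abs; ring.
Qed.

Section Graph.
Hypothesis htors : almost_torsion_free M.
Variable B : 'M[K]_r.
Hypothesis B_unit : B \in unitmx.
Hypothesis lattice_lb : forall (v : 'rV[K]_r) (e : K), (forall i, abs (v 0 i) <= 1) ->
  abs e < 1 -> roof_lattice (e *: (v *m B)).
Hypothesis lattice_ub : forall u, roof_lattice u ->
  exists2 v : 'rV[K]_r, (forall i, abs (v 0 i) <= 1) & u = v *m B.

Definition in_graph (p : 'rV[K]_r * M) :=
  (forall i, abs (p.1 0 i) <= 1) /\ corresponds (p.1 *m B) p.2.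

Definition graph_pred : {pred 'rV[K]_r * M} := fun p => `[< in_graph p >].

Lemma graph_predP p : reflect (in_graph p) (p \in graph_pred).
Proof. exact: asboolP. Qed.

Fact graph_pred_zmod_closed : zmod_closed graph_pred.
Proof.
split.
  apply/graph_predP; split=> [i|]; first by rewrite mxE abs0 // ler01.
  by rewrite mul0mx; apply: corresponds0.
move=> [u y] [u' y'] /graph_predP[u_le1 uy] /graph_predP[u'_le1 uy'].
apply/graph_predP; split=> [i|] /=; last by rewrite mulmxBl; apply/correspondsD/correspondsN.
by rewrite !mxE; apply: absD_le => //; rewrite absN.
Qed.

HB.instance Definition _ := GRing.isZmodClosed.Build _ graph_pred graph_pred_zmod_closed.

Inductive graph : predArgType := Graph p of p \in graph_pred.
Definition graph_val w := let: Graph p _ := w in p.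
HB.instance Definition _ := [isSub for graph_val].
HB.instance Definition _ := [Choice of graph by <:].
HB.instance Definition _ := [SubChoice_isSubZmodule of graph by <:].

Lemma graph_valP w : in_graph (graph_val w).
Proof. by case: w => p hp; apply/graph_predP. Qed.

Definition pair_act a (p : 'rV[K]_r * M) := (val a *: p.1, mact a p.2).

Lemma pair_act_graph a p : p \in graph_pred -> pair_act a p \in graph_pred.
Proof.
move=> /graph_predP[u_le1 uy]; apply/graph_predP; split => [i|] /=.
  by rewrite mxE absM //; apply: mulr_ile1; rewrite ?abs_ge0 ?(valP a).
by rewrite -scalemxAl; apply: correspondsZ.
Qed.

Definition graph_act a (w : graph) : graph :=
  let: Graph p hp := w in Graph (pair_act_graph a hp).

Lemma graph_actE a w : graph_val (graph_act a w) = pair_act a (graph_val w).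
Proof. by case: w. Qed.

Lemma graph_val_inj : injective graph_val. Proof. exact: val_inj. Qed.

Lemma graph_valD : {morph graph_val : w w' / w + w'}. Proof. by []. Qed.

Lemma graph_actDr a : {morph graph_act a : w w' / w + w'}.
Proof.
move=> w w'; apply: graph_val_inj; rewrite !(graph_valD, graph_actE) /pair_act.
by case: (graph_val w) (graph_val w') => [u y] [u' y'] /=; rewrite scalerDr mactDr.
Qed.

Lemma graph_actDl a b c w : val c = val a + val b ->
  graph_act c w = graph_act a w + graph_act b w.
Proof.
move=> cab; apply: graph_val_inj; rewrite !(graph_valD, graph_actE) /pair_act.
by case: (graph_val w) => u y /=; rewrite cab scalerDl (mactDl y cab).
Qed.

Lemma graph_actA a b c w : val c = val a * val b ->
  graph_act c w = graph_act a (graph_act b w).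
Proof.
move=> cab; apply: graph_val_inj; rewrite !graph_actE /pair_act.
by case: (graph_val w) => u y /=; rewrite cab scalerA (mactA y cab).
Qed.

Lemma graph_act1 a w : val a = 1 -> graph_act a w = w.
Proof.
move=> a1; apply: graph_val_inj; rewrite graph_actE /pair_act.
by case: (graph_val w) => u y /=; rewrite a1 scale1r (mact1 y a1).
Qed.

Definition graph_omod : omod abs := OMod graph_actDr graph_actDl graph_actA graph_act1.

Definition graph_coord i (w : graph_omod) : intring abs :=
  intring_of ((graph_valP w).1 i).

Definition graph_proj (w : graph_omod) : M := (graph_val w).2.

Lemma corresponds0_almost_zero y : corresponds 0 y -> forall e, in_mideal e -> mact e y = 0.
Proof.
move=> [c c0 hc]; have [e' e'_lt1 e'_neq0] := exists_mideal_neq0 hval.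
have [x hx fx] := hc e' e'_lt1.
have sx0 i : val (s i x) = 0 by rewrite hx scaler0 mxE.
have := congr1 f (s_ker e'_lt1 sx0); rewrite fZ fx (addmorph0 fD) !mactM.
by apply: htors; rewrite !mulf_neq0.
Qed.

Lemma graph_coord_almost_iso : almost_iso_free graph_coord.
Proof.
split=> [i|e w e_lt1 w0|e v e_lt1].
- by split=> [w w'|a w]; rewrite /graph_coord /= ?graph_actE !mxE.
- have u0 : (graph_val w).1 = 0 by apply/rowP => i; rewrite mxE; apply: w0.
  have [_] := graph_valP w; rewrite u0 mul0mx => /corresponds0_almost_zero /(_ e e_lt1) ey0.
  by apply: graph_val_inj; rewrite graph_actE /pair_act u0 ey0 scaler0.
- have [g' [e' [g'_lt1 e'_lt1 _ e_eq]]] := mideal_factor hK hval e_lt1.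
  pose v' := \row_i val (v i).
  have v'_le1 i : abs (v' 0 i) <= 1 by rewrite mxE; exact: (valP (v i)).
  have [y hy] := lattice_lb v'_le1 g'_lt1 e'_lt1.
  have hp : (val e *: v', y) \in graph_pred.
    apply/graph_predP; split=> [i|] /=.
      by rewrite mxE absM //; apply: mulr_ile1; rewrite ?abs_ge0 ?(ltW e_lt1).
    by rewrite -scalemxAl e_eq -scalerA.
  by exists (Graph hp) => i; rewrite /graph_coord /= !mxE.
Qed.

Lemma graph_proj_almost_iso : almost_iso graph_proj.
Proof.
split=> [|e w e_lt1 w0|e y e_lt1].
- by split=> [w w'|a w]; rewrite /graph_proj /= ?graph_actE.
- have [_ uy] := graph_valP w; rewrite /graph_proj in w0; rewrite w0 in uy.
  have /(congr1 (mulmx^~ (invmx B))) := corresponds_inj uy (fun e' _ => mactr0 _ e').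
  rewrite mulmxK // mul0mx => u0.
  suff -> : w = 0 by apply: mactr0.
  by apply: graph_val_inj; case: (graph_val w) u0 w0 => ? ? /= -> ->.
- have [u uy] := corresponds_surj y.
  have [v v_le1 uv] := lattice_ub (corresponds_lattice uy).
  have hp : (val e *: v, mact e y) \in graph_pred.
    apply/graph_predP; split=> [i|] /=.
      by rewrite mxE absM //; apply: mulr_ile1; rewrite ?abs_ge0 ?(ltW e_lt1).
    by rewrite -scalemxAl -uv; apply: correspondsZ.
  by exists (Graph hp).
Qed.

End Graph.

Lemma roof_almost_iso_to_free : spherically_complete abs -> almost_torsion_free M ->
  almost_iso_to_free M r.
Proof.
move=> hsph htors.
have [B B_unit [lattice_lb lattice_ub]] := almost_lattice_basis hK hsph hval g_neq0
  roof_latticeD roof_latticeZ roof_lattice_unit roof_lattice_bounded.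
exists (graph_omod B), (@graph_coord B), (@graph_proj B); split.
  exact (graph_coord_almost_iso htors lattice_lb).
exact (graph_proj_almost_iso B_unit lattice_ub).
Qed.

End Roof.

Lemma almost_finite_free_torsion M r : almost_finite_free M r -> almost_torsion_free M.
Proof.
move=> hM y c c0 cy0 e e_lt1.
have [g [e' [g_lt1 e'_lt1 g_neq0 e_eq]]] := mideal_factor hK hval e_lt1.
have [X [s [f hroof]]] := almost_finite_free_roof hM g_lt1.
have -> : mact e y = mact e' (mact g y) by rewrite mactM; apply: eq_mact.
exact (roof_torsion hroof g_neq0 c0 cy0 e'_lt1).
Qed.

End AlmostFiniteFree.

Theorem theorem5p3 (R : realType) (K : fieldType) (abs : K -> R)
  (hK : nonarch_field abs) (hsph : spherically_complete abs)
  (hval : value_group_full abs)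
  (M : omod abs) (r : nat) (hM : almost_finite_free M r) :
  exists n : nat, almost_iso_to_free M n.
Proof.
exists r; have [g g_lt1 g_neq0] := exists_mideal_neq0 hval.
have [X [s [f hroof]]] := almost_finite_free_roof hM g_lt1.
exact: roof_almost_iso_to_free hroof g_neq0 hsph (almost_finite_free_torsion hK hval hM).
Qed.
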